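(* The smallest number of vertices of an arithmetic sizeable graph is $36$. That is, for $n=9$ there is an arithmetic graph which is sizeable with respect to the partitions $A=A_0\sqcup A_1$, $B=B_0\sqcup B_1$, and for no $n\le 8$ is there such an arithmetic graph.
   Context: A simplicial graph $\Gamma$ is sizeable with respect to partitions $A=A_0\sqcup A_1$, $B=B_0\sqcup B_1$ if it is bipartite on $A$ and $B$, contains no cycle of length $4$, and each induced subgraph $\Gamma(A_s\sqcup B_t)$, $s,t\in\{0,1\}$, is connected. A graph is arithmetic if it is built as follows: the vertices are divided into four sets $A_0,A_1,B_0,B_1$, each of size $n$ and identified with $\mathbb{Z}/n$ (write $a_s^i$, $b_t^i$ for $i\in\mathbb{Z}/n$); there are eight numbers $h_{s,t},k_{s,t}\in\mathbb{Z}/n$ for $s,t\in\{0,1\}$; and the vertex $a_s^i$ is joined by an edge to $b_t^{i+h_{s,t}}$ and to $b_t^{i+k_{s,t}}$, for all $i,s,t$; there are no other edges. Here $A=A_0\sqcup A_1$, $B=B_0\sqcup B_1$. *)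

From mathcomp Require Import all_boot.
Set Implicit Arguments. Unset Strict Implicit. Unset Printing Implicit Defensive.

Section Graphs.
Variable V : finType.

Definition simplicial (e : rel V) : Prop :=
  irreflexive e /\ symmetric e.

Definition bipartite_on (e : rel V) (A B : {set V}) : Prop :=
  [disjoint A & B] /\ A :|: B = setT /\
  (forall x y, e x y -> (x \in A) && (y \in B) || (x \in B) && (y \in A)).

Definition has_4cycle (e : rel V) : Prop :=
  exists x1 x2 x3 x4 : V,
    [/\ uniq [:: x1; x2; x3; x4],
        e x1 x2, e x2 x3, e x3 x4 & e x4 x1].

Definition induced (e : rel V) (S : {set V}) : rel V :=
  [rel x y | [&& x \in S, y \in S & e x y]].

Definition connected_on (e : rel V) (S : {set V}) : Prop :=
  S != set0 /\ (forall x y, x \in S -> y \in S -> connect (induced e S) x y).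

Definition sizeable (e : rel V) (A0 A1 B0 B1 : {set V}) : Prop :=
  simplicial e /\
  [disjoint A0 & A1] /\ [disjoint B0 & B1] /\
  bipartite_on e (A0 :|: A1) (B0 :|: B1) /\
  ~ has_4cycle e /\
  (forall s t : bool,
     connected_on e ((if s then A1 else A0) :|: (if t then B1 else B0))).
End Graphs.

(* Vertex (c, s, i): c = false means a_s^i in A_s, c = true means b_s^i in B_s;
   indices i in 'I_n, representing Z/n (n > 0). *)
Definition Vert (n : nat) : finType := (bool * bool * 'I_n)%type.

Section Arith.
Variable n : nat.
Variables h k : bool -> bool -> 'I_n.

Definition arith_AB (s : bool) (i : 'I_n) (t : bool) (j : 'I_n) : bool :=
  (nat_of_ord j == (i + h s t) %% n) || (nat_of_ord j == (i + k s t) %% n).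

Definition arith_adj : rel (Vert n) :=
  fun x y =>
    match x, y with
    | (false, s, i), (true, t, j) => arith_AB s i t j
    | (true, t, j), (false, s, i) => arith_AB s i t j
    | _, _ => false
    end.

Definition arith_part (c s : bool) : {set Vert n} :=
  [set x : Vert n | (x.1.1 == c) && (x.1.2 == s)].
End Arith.

Definition arith_sizeable (n : nat) (h k : bool -> bool -> 'I_n) : Prop :=
  sizeable (arith_adj h k)
    (arith_part n false false) (arith_part n false true)
    (arith_part n true false) (arith_part n true true).

From mathcomp Require Import all_boot all_order all_algebra.
From mathcomp Require Import ring.
Set Implicit Arguments. Unset Strict Implicit. Unset Printing Implicit Defensive.
Import GRing.Theory.

(* Write the neighbours of a_s^i in B_t as i + S(s,t,e), where S(s,t,false) = h_{s,t}
   and S(s,t,true) = k_{s,t}.  A 4-cycle a_s - b_t - a_s' - b_t' - a_s amounts to a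
   vanishing alternating sum S(s,t,e1) - S(s',t,e2) + S(s',t',e3) - S(s,t',e4) = 0 in
   Z/n (a "square", subject to non-degeneracy conditions), and which squares exist is
   unchanged by adding u_s + v_t to every S(s,t,_) or by multiplying S by a unit.
   If k_{s,t} - h_{s,t} is not a unit mod n, then the index modulo
   gcd(k_{s,t} - h_{s,t}, n), after shifting B_t by h_{s,t}, is constant along the
   edges of A_s u B_t, which is therefore disconnected.  So for n <= 8 one may assume
   h = (0, 0, 0, c) and k - h = (1, d01, d10, d11) with units d_{st}, and an
   exhaustive search finds a square in every case.  For n = 9 an explicit graph is
   checked by computation. *)

Section FiniteGraphs.
Variables (T : finType) (e : rel T) (vs : seq T).
Hypothesis vsT : forall x, x \in vs.

Lemma connect_constant (R : Type) (f : T -> R) :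
  (forall x y, e x y -> f x = f y) -> forall x y, connect e x y -> f x = f y.
Proof.
move=> ef x y /connectP[p]; elim: p x => [|z p IHp] x /=; first by move=> _ ->.
by case/andP=> /ef-> ep yp; apply: IHp.
Qed.

(* Conditionals rather than [&&] stop vm_compute from running the inner searches
   at non-edges. *)
Lemma has_4cycle_has :
  has_4cycle e ->
  has (fun x1 => has (fun x2 => if e x1 x2 then has (fun x3 => if e x2 x3 then
    has (fun x4 => [&& e x3 x4, e x4 x1 & uniq [:: x1; x2; x3; x4]]) vs else false) vs
    else false) vs) vs.
Proof.
move=> [x1 [x2 [x3 [x4 [u e12 e23 e34 e41]]]]].
apply/hasP; exists x1 => //; apply/hasP; exists x2; rewrite ?e12 //=.
apply/hasP; exists x3; rewrite ?e23 //=.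
by apply/hasP; exists x4; rewrite ?e34 ?e41 ?u.
Qed.

Definition induced_adj (P : pred T) (x : T) : seq T :=
  [seq y <- vs | [&& P x, P y & e x y]].

Lemma connected_on_dfs (S : {set T}) (P : pred T) (nT : nat) :
  #|T| <= nT -> (forall x, (x \in S) = P x) -> has P vs ->
  all (fun x => P x ==> let reached := dfs (induced_adj P) nT [::] x in
                        all (fun y => P y ==> (y \in reached)) vs) vs ->
  connected_on e S.
Proof.
move=> leTn SP /hasP[x0 _ Px0] /allP conn; split; first by apply/set0Pn; exists x0; rewrite SP.
move=> x y; rewrite !SP => Px Py.
have /implyP/(_ Px)/allP/(_ y (vsT y))/implyP/(_ Py) := conn x (vsT x).
have lenT : #|T| <= #|([::] : seq T)| + nT by rewrite card0.
case/(dfs_pathP _ _ lenT (negbT (in_nil y))) => p p_path -> _; apply/connectP; exists p => //.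
rewrite (eq_path (e' := grel (induced_adj P))) // => a b.
by rewrite /induced /= mem_filter vsT andbT !SP.
Qed.

End FiniteGraphs.

Section ArithmeticGraphs.
Variables (n : nat) (h k : bool -> bool -> 'I_n).

Lemma arith_adj_sym : symmetric (arith_adj h k).
Proof. by move=> [[[] s] i] [[[] t] j]. Qed.

Lemma arith_adj_irr : irreflexive (arith_adj h k).
Proof. by move=> [[[] s] i]. Qed.

Lemma arith_sizeableE :
  arith_sizeable h k <->
  ~ has_4cycle (arith_adj h k) /\
  forall s t, connected_on (arith_adj h k) (arith_part n false s :|: arith_part n true t).
Proof.
split=> [[_ [_ [_ [_ [no4 conn]]]]] | [no4 conn]].
  by split=> // s t; have := conn s t; case: s; case: t.
have disj c : [disjoint arith_part n c false & arith_part n c true].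
  by rewrite -setI_eq0; apply/eqP/setP => -[[c' []] i]; rewrite !inE ?andbF.
split; first by split; [exact: arith_adj_irr | exact: arith_adj_sym].
do 2 (split; first exact: disj).
split; last by split=> // s t; case: s; case: t; apply: conn.
split; first by rewrite -setI_eq0; apply/eqP/setP => -[[[] []] i]; rewrite !inE.
split; first by apply/setP => -[[[] []] i]; rewrite !inE.
by move=> [[[] s] i] [[[] t] j]; rewrite !inE //=; case: s; case: t.
Qed.

Definition shift (s t e : bool) : 'I_n := if e then k s t else h s t.

End ArithmeticGraphs.

(* Unlike [P false || P true], this short-circuits under vm_compute. *)
Definition exists_bool (P : pred bool) : bool := if P false then true else P true.

Lemma exists_boolP (P : pred bool) : reflect (exists b, P b) (exists_bool P).
Proof.
rewrite /exists_bool; case: ifP => [Pf|Pf]; first by left; exists false.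
by apply: (iffP idP) => [Pt | [[] Pb]]; [exists true | | rewrite Pb in Pf].
Qed.

Definition square_rel (n : nat) (S : bool -> bool -> bool -> nat) : bool :=
  exists_bool (fun s => exists_bool (fun t => exists_bool (fun s' => exists_bool (fun t' =>
  exists_bool (fun e1 => exists_bool (fun e2 => exists_bool (fun e3 => exists_bool (fun e4 =>
    [&& S s t e1 + S s' t' e3 == S s' t e2 + S s t' e4 %[mod n],
        (s != s') || (S s t e1 != S s' t e2 %[mod n]) &
        (t != t') || (S s t e1 != S s t' e4 %[mod n])])))))))).

Definition mat (T : Type) (a b c d : T) (s t : bool) : T :=
  if s then if t then d else c else if t then b else a.

(* The shifts, reduced mod n, of the graph with h = mat 0 0 0 c and
   k - h = mat d00 d01 d10 d11. *)
Definition normal_shift (n c d00 d01 d10 d11 : nat) (s t e : bool) : nat :=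
  ((if s && t then c else 0) + (if e then mat d00 d01 d10 d11 s t else 0)) %% n.

Definition units_force_square (n : nat) : bool :=
  all (fun b => all (fun c => all (fun d => all (fun x =>
    if [&& coprime n b, coprime n c & coprime n d]
    then square_rel n (normal_shift n x 1 b c d) else true)
  (iota 0 n)) (iota 0 n)) (iota 0 n)) (iota 0 n).

Lemma units_force_square_le8 n : 1 < n -> n <= 8 -> units_force_square n.
Proof. by do 9 (case: n => [|n]; first by vm_compute). Qed.

Lemma all_iota (P : pred nat) n : all P (iota 0 n) -> forall x : 'I_n, P x.
Proof. by move=> /allP Pn x; apply: Pn; rewrite mem_iota ltn_ord. Qed.

Section ZpArithmeticGraphs.
Variables (m : nat) (h k : bool -> bool -> 'I_m.+2).
Local Notation n := m.+2.
Local Open Scope ring_scope.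

Lemma unitZp_coprime (x : 'I_n) : (x \is a GRing.unit) = coprime n x.
Proof. by rewrite qualifE. Qed.

Lemma eqZp_modn (x y : 'I_n) : (val x == val y %[mod n])%N = (x == y).
Proof. by rewrite !modn_small ?ltn_ord. Qed.

Lemma eqZp_modnD (x y z w : 'I_n) :
  (val x + val y == val z + val w %[mod n])%N = (x + y == z + w).
Proof. by []. Qed.

Lemma arith_ABE s (i : 'I_n) t j : arith_AB h k s i t j = (j == i + h s t) || (j == i + k s t).
Proof. by []. Qed.

Lemma arith_AB_shift s (i : 'I_n) t j e : j = i + shift h k s t e -> arith_AB h k s i t j.
Proof. by move=> ->; rewrite arith_ABE /shift; case: e; rewrite eqxx ?orbT. Qed.

Lemma four_cycle_of_square (w : 'I_n) (u v : bool -> 'I_n) (S : bool -> bool -> bool -> nat) :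
  w \is a GRing.unit -> (forall s t e, S s t e = val (w * shift h k s t e + u s + v t)) ->
  square_rel n S -> has_4cycle (arith_adj h k).
Proof.
move=> wU SE /exists_boolP[s /exists_boolP[t /exists_boolP[s' /exists_boolP[t']]]].
move=> /exists_boolP[e1 /exists_boolP[e2 /exists_boolP[e3 /exists_boolP[e4]]]].
rewrite !SE eqZp_modnD !eqZp_modn; set R := shift h k.
case/and3P=> /eqP sq a_ne b_ne.
have walt0 : w * (R s t e1 - R s' t e2 + R s' t' e3 - R s t' e4) = 0.
  transitivity (w * R s t e1 + u s + v t + (w * R s' t' e3 + u s' + v t')
     - (w * R s' t e2 + u s' + v t + (w * R s t' e4 + u s + v t'))); first by ring.
  by rewrite sq subrr.
have cyc : R s t e1 - R s' t e2 + R s' t' e3 = R s t' e4.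
  by apply/eqP; rewrite -subr_eq0 -[_ - R s t' e4](mulKr wU) walt0 mulr0.
have a_ne' : (s != s') || (R s t e1 != R s' t e2).
  by case: eqVneq a_ne => [<-|//] /=; apply: contra => /eqP->.
have b_ne' : (t != t') || (R s t e1 != R s t' e4).
  by case: eqVneq b_ne => [<-|//] /=; apply: contra => /eqP->.
exists (false, s, 0), (true, t, R s t e1),
  (false, s', R s t e1 - R s' t e2), (true, t', R s t' e4); split.
- by rewrite /= !inE !xpair_eqE /= orbF andbT [0 == _]eq_sym subr_eq0 !negb_and a_ne' b_ne'.
- by apply: (arith_AB_shift (e := e1)); rewrite add0r.
- by apply: (arith_AB_shift (e := e2)); rewrite subrK.
- by apply: (arith_AB_shift (e := e3)); rewrite cyc.
- by apply: (arith_AB_shift (e := e4)); rewrite add0r.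
Qed.

Lemma shift_normal_form (w : 'I_n) : exists u v : bool -> 'I_n, forall s t e,
  w * shift h k s t e + u s + v t =
  (if s && t then w * (h false false - h true false + h true true - h false true) else 0)
  + (if e then w * (k s t - h s t) else 0).
Proof.
exists (fun s => w * (h false false - h s false)), (fun t => - (w * h false t)).
by move=> [] [] []; rewrite /shift /=; ring.
Qed.

Lemma val_normal_shift (c : 'I_n) (D : bool -> bool -> 'I_n) s t e :
  val ((if s && t then c else 0) + (if e then D s t else 0)) =
  normal_shift n c (D false false) (D false true) (D true false) (D true true) s t e.
Proof. by case: s; case: t; case: e. Qed.

Lemma unit_diff_of_connected s t :
  connected_on (arith_adj h k) (arith_part n false s :|: arith_part n true t) ->
  k s t - h s t \is a GRing.unit.
Proof.
move=> [_ conn]; rewrite unitZp_coprime; apply: contraT => not_coprime.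
set d := k s t - h s t; set g := gcdn n d.
have g_gt1 : (1 < g)%N.
  have : (0 < g)%N by rewrite gcdn_gt0.
  by move: not_coprime; rewrite /coprime -/g; case: g => [|[|]].
have residue_d (i : 'I_n) : (val (i + d)%R %% g = val i %% g)%N.
  by rewrite /= (modn_dvdm _ (dvdn_gcdl _ _)) -modnDmr (eqP (dvdn_gcdr _ _)) addn0.
pose f (x : Vert n) : nat :=
  let: (c, _, i) := x in (val (if c then i - h s t else i)%R %% g)%N.
have f_const : forall x y,
    induced (arith_adj h k) (arith_part n false s :|: arith_part n true t) x y -> f x = f y.
  (* cbv rather than /=, which would also unfold the Zp operations *)
  move=> x y /and3P[]; case: x y => [[[] s1] i] [[[] t1] j] xS yS;
    rewrite [arith_adj _ _ _ _]/= ?arith_ABE //; rewrite !inE /= ?orbF in xS yS;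
    move: xS yS => /eqP-> /eqP-> /orP[] /eqP->; unfold f; cbv beta iota;
    by rewrite ?addrK // -addrA residue_d.
have part_s i : (false, s, i) \in arith_part n false s :|: arith_part n true t.
  by rewrite !inE /= eqxx.
have := connect_constant f_const (conn _ _ (part_s 0) (part_s 1)).
by rewrite /= mod0n modn_small.
Qed.

End ZpArithmeticGraphs.

Lemma no_arith_sizeable_le8 m (h k : bool -> bool -> 'I_m.+2) :
  m.+2 <= 8 -> ~ arith_sizeable h k.
Proof.
move=> n_le8 /arith_sizeableE[no4 conn]; apply: no4.
have d_unit s t : (k s t - h s t)%R \is a GRing.unit := unit_diff_of_connected (conn s t).
set w := ((k false false - h false false)^-1)%R.
set D := fun s t => (w * (k s t - h s t))%R.
set c := (w * (h false false - h true false + h true true - h false true))%R.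
have D_unit s t : D s t \is a GRing.unit by rewrite /D unitrMr ?unitrV.
have D00 : D false false = 1%R by rewrite /D mulVr.
have [u [v uvE]] := shift_normal_form h k w.
apply: (four_cycle_of_square (w := w) (u := u) (v := v)
         (S := normal_shift m.+2 c 1 (D false true) (D true false) (D true true))).
- by rewrite unitrV.
- by move=> s t e; rewrite uvE (val_normal_shift c D) D00.
have := units_force_square_le8 (n := m.+2) isT n_le8.
move/all_iota/(_ (D false true))/all_iota/(_ (D true false))/all_iota/(_ (D true true)).
by move/all_iota/(_ c); rewrite -!unitZp_coprime !D_unit.
Qed.

Lemma arith_4cycle_1 (h k : bool -> bool -> 'I_1) : has_4cycle (arith_adj h k).
Proof.
exists (false, false, ord0), (true, false, ord0), (false, true, ord0), (true, true, ord0).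
by split; rewrite //= /arith_AB !modn1 ?orbT.
Qed.

Definition Zp_enum p : seq 'I_p.+1 := map inZp (iota 0 p.+1).

Lemma mem_Zp_enum p (i : 'I_p.+1) : i \in Zp_enum p.
Proof.
apply/mapP; exists (val i); first by rewrite mem_iota ltn_ord.
by apply: val_inj; rewrite /= modn_small.
Qed.

Definition vertices p : seq (Vert p.+1) :=
  [seq (cs, i) | cs <- [:: (false, false); (false, true); (true, false); (true, true)],
                 i <- Zp_enum p].

Lemma mem_vertices p (x : Vert p.+1) : x \in vertices p.
Proof.
case: x => [[c s] i]; apply/allpairsP; exists ((c, s), i); split => //=.
  by case: c; case: s.
exact: mem_Zp_enum.
Qed.

Definition in_part n (s t : bool) (x : Vert n) : bool :=
  if x.1.1 then x.1.2 == t else x.1.2 == s.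

Lemma arith_partU n s t x :
  (x \in arith_part n false s :|: arith_part n true t) = in_part s t x.
Proof. by case: x => [[[] s1] i]; rewrite !inE /= ?orbF. Qed.

Definition h9 : bool -> bool -> 'I_9 := mat ord0 ord0 ord0 (inZp 5).
Definition k9 : bool -> bool -> 'I_9 := mat (inZp 1) (inZp 2) (inZp 2) (inZp 6).

Lemma arith_sizeable9 : arith_sizeable h9 k9.
Proof.
apply/arith_sizeableE; split.
  by move/(has_4cycle_has (@mem_vertices 8)); vm_compute.
move=> s t; apply: (connected_on_dfs (@mem_vertices 8) (nT := 36) _ (@arith_partU 9 s t)).
- by rewrite !card_prod card_bool card_ord.
- by case: s; case: t; vm_compute.
- by case: s; case: t; vm_compute.
Qed.

Theorem mainTheorem12 :
  (exists h k : bool -> bool -> 'I_9, arith_sizeable h k) /\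
  (forall n : nat, 0 < n -> n <= 8 ->
     forall h k : bool -> bool -> 'I_n, ~ arith_sizeable h k).
Proof.
split; first by exists h9, k9; exact: arith_sizeable9.
case=> [//|[|m] _ le8 h k]; last exact: no_arith_sizeable_le8.
by case/arith_sizeableE=> no4 _; apply: no4 (arith_4cycle_1 h k).
Qed.
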